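(* Let $n\ge2$ and $0\le k\le n-2$ be integers, and let $\alpha\in I_{r,n+1}$ with $r>3+k$ and $\alpha_1=n-k$. Then $c^{(n+1)}_\alpha=0$.
   Context: Let $T_1,T_2,\dots$ be indeterminates, $T_\alpha=T_{\alpha_1}\cdots T_{\alpha_d}$. Define linear operators $L,H$ on monomials (constants sent to $0$): $L(T_{\alpha_1}\cdots T_{\alpha_r})=\sum_{1\le i<j\le r}T_{\alpha_1}\cdots T_{\alpha_i+1}\cdots T_{\alpha_j+1}\cdots T_{\alpha_r}$, $H(T_{\alpha_1}\cdots T_{\alpha_r})=-\frac12\sum_{k=1}^{r}\sum_{l=1}^{\alpha_k-1}\binom{\alpha_k}{l}T_{1+l}T_{1+\alpha_k-l}\prod_{i\ne k}T_{\alpha_i}$. For $n\ge2$ let $A_n=-\sum_{k=1}^{n-1}\binom{n}{k}T_{1+k}T_{1+n-k}T_n$; set $R_2=0$, $R_{n+1}=A_n+L(R_n)+H(R_n)$. $I_{r,n}$ is the set of non-increasing $r$-tuples of integers in $\{2,\dots,n-1\}$ with sum $2n$, and $c^{(n)}_\alpha$ is the coefficient of the monomial $T_\alpha$ in $R_n$. *)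

(* Polynomials in the indeterminates T_1, T_2, ... with
   rational coefficients are represented as finite lists of terms
   (monomial, coefficient); a monomial T_{a_1}...T_{a_r} is the list
   [:: a_1; ...; a_r] (order irrelevant, variables commute). *)
From HB Require Import structures.
From mathcomp Require Import all_boot all_order all_algebra.
Set Implicit Arguments. Unset Strict Implicit. Unset Printing Implicit Defensive.
Import Order.TTheory GRing.Theory Num.Theory.
Local Open Scope ring_scope.

Definition monom := seq nat.
Definition tpoly := seq (monom * rat).

Definition coef (P : tpoly) (alpha : monom) : rat :=
  \sum_(t <- P | perm_eq t.1 alpha) t.2.

Definition L_mon (m : monom) : seq monom :=
  let r := size m in
  flatten [seq [seq [seq (nth 0%N m t + ((t == i) || (t == j)))%N | t <- iota 0 r]
               | j <- iota i.+1 (r - i.+1)] | i <- iota 0 r].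

Definition H_mon (m : monom) : tpoly :=
  let r := size m in
  flatten [seq
    [seq ((1 + l)%N :: (1 + (nth 0%N m k - l))%N
            :: [seq nth 0%N m t | t <- iota 0 r & t != k],
          - (1/2) * ('C(nth 0%N m k, l))%:R)
      | l <- iota 1 (nth 0%N m k).-1]
    | k <- iota 0 r].

Definition Lop (P : tpoly) : tpoly :=
  flatten [seq [seq (m', t.2) | m' <- L_mon t.1] | t <- P].

Definition Hop (P : tpoly) : tpoly :=
  flatten [seq [seq (u.1, t.2 * u.2) | u <- H_mon t.1] | t <- P].

Definition Aop (n : nat) : tpoly :=
  [seq ([:: (1 + k)%N; (1 + (n - k))%N; n], - ('C(n, k))%:R) | k <- iota 1 n.-1].

(* R_2 = 0, R_{n+1} = A_n + L(R_n) + H(R_n) for n >= 2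
   (values at 0, 1 are irrelevant and set to 0) *)
Fixpoint Rpoly (n : nat) : tpoly :=
  match n with
  | 0 | 1 | 2 => [::]
  | m.+1 => Aop m ++ Lop (Rpoly m) ++ Hop (Rpoly m)
  end.

Definition in_I (r n : nat) (alpha : monom) : Prop :=
  size alpha = r /\ sorted geq alpha /\ all (fun a => 2 <= a <= n.-1)%N alpha
  /\ sumn alpha = (2 * n)%N.

(* Give a monomial T_{a_1}...T_{a_r} the weight max a_i + r.  The operator L
   keeps r and raises each index by at most one, the operator H trades one
   index a for two indices at most a and one more factor, and every monomial of
   A_n has weight at most n + 3; hence all monomials of R_N have weight at most
   N + 2.  Under the hypotheses, alpha has weight at least
   alpha_1 + r >= (n - k) + (k + 4) = n + 4 > (n + 1) + 2, so T_alpha does not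
   occur in R_{n+1}. *)
From mathcomp Require Import all_boot all_order all_algebra.
From mathcomp Require Import zify.
Local Open Scope ring_scope.

Definition mweight (m : monom) : nat := (\max_(a <- m) a + size m)%N.

Definition weight_le (w : nat) (P : tpoly) : bool :=
  all (fun t : monom * rat => mweight t.1 <= w)%N P.

Lemma leq_max_monom {m : monom} {a : nat} : a \in m -> (a <= \max_(b <- m) b)%N.
Proof. by move=> am; apply: (leq_bigmax_seq a). Qed.

Lemma mweight_perm {m m' : monom} : perm_eq m m' -> mweight m = mweight m'.
Proof. by move=> pm; rewrite /mweight (perm_big _ pm) (perm_size pm). Qed.

Lemma coef_eq0_weight {P : tpoly} {w : nat} (alpha : monom) :
  weight_le w P -> (w < mweight alpha)%N -> coef P alpha = 0.
Proof.
move=> /allP Pw walpha; rewrite /coef big_seq_cond big1 // => t /andP [tP pt].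
by move: (Pw t tP); rewrite (mweight_perm pt) leqNgt walpha.
Qed.

Lemma L_mon_weight {m m' : monom} :
  m' \in L_mon m -> (mweight m' <= (mweight m).+1)%N.
Proof.
case/flatten_mapP => i _ /mapP [j _ ->]; rewrite /mweight size_map size_iota.
suff : (\max_(a <- [seq (nth 0 m t + ((t == i) || (t == j)))%N
                    | t <- iota 0 (size m)]) a <= (\max_(b <- m) b).+1)%N.
  by rewrite -addSn leq_add2r.
apply/bigmax_leqP_seq => x /mapP [t]; rewrite mem_iota add0n => /andP [_ tm] -> _.
have := leq_max_monom (mem_nth 0%N tm); case: (_ || _) => /= ?; lia.
Qed.

Lemma H_mon_weight {m : monom} {u : monom * rat} :
  u \in H_mon m -> (mweight u.1 <= (mweight m).+1)%N.
Proof.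
case/flatten_mapP => k; rewrite mem_iota add0n => /andP [_ km] /mapP [l].
rewrite mem_iota => /andP [l_ge1 l_lt] -> /=; rewrite /mweight !big_cons /=.
set rest := [seq nth 0%N m t | t <- _ & _].
have rest_le : (\max_(b <- rest) b <= \max_(b <- m) b)%N.
  apply/bigmax_leqP_seq => x /mapP [t]; rewrite mem_filter mem_iota add0n.
  by move=> /andP [_ /andP [_ tm]] -> _; apply/leq_max_monom/mem_nth.
have size_rest : size rest = (size m).-1.
  by rewrite /rest -rem_filter ?iota_uniq // size_map size_rem ?mem_iota // size_iota.
have mk_le : (nth 0 m k <= \max_(b <- m) b)%N := leq_max_monom (mem_nth 0%N km).
rewrite size_rest; lia.
Qed.

Lemma Aop_weight n : weight_le n.+3 (Aop n).
Proof.
apply/allP => t /mapP [k]; rewrite mem_iota => /andP [k_ge1 k_lt] -> /=.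
rewrite /mweight /= !big_cons big_nil /=; lia.
Qed.

Lemma Lop_weight {P : tpoly} {w : nat} : weight_le w P -> weight_le w.+1 (Lop P).
Proof.
move=> /allP Pw; apply/allP => x /flatten_mapP [t tP] /mapP [m' m't ->].
by apply: leq_trans (L_mon_weight m't) _; rewrite ltnS Pw.
Qed.

Lemma Hop_weight {P : tpoly} {w : nat} : weight_le w P -> weight_le w.+1 (Hop P).
Proof.
move=> /allP Pw; apply/allP => x /flatten_mapP [t tP] /mapP [u ut ->].
by apply: leq_trans (H_mon_weight ut) _; rewrite ltnS Pw.
Qed.

Lemma weight_le_cat w (P Q : tpoly) :
  weight_le w (P ++ Q) = weight_le w P && weight_le w Q.
Proof. exact: all_cat. Qed.

Lemma Rpoly_weight N : weight_le N.+2 (Rpoly N).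
Proof.
elim: N => [|[|[|N]] IH] //.
have -> : Rpoly N.+3 = Aop N.+2 ++ Lop (Rpoly N.+2) ++ Hop (Rpoly N.+2) by [].
by rewrite !weight_le_cat Aop_weight (Lop_weight IH) (Hop_weight IH).
Qed.

Theorem mainTheorem11 (n k r : nat) (alpha : seq nat) :
  (2 <= n)%N -> (k <= n - 2)%N ->
  in_I r n.+1 alpha -> (3 + k < r)%N -> nth 0%N alpha 0 = (n - k)%N ->
  coef (Rpoly n.+1) alpha = 0.
Proof.
move=> n_ge2 k_le [size_alpha _] r_gt alpha1.
apply: (coef_eq0_weight _ (Rpoly_weight n.+1)).
have alpha1_le : (n - k <= \max_(a <- alpha) a)%N.
  by rewrite -alpha1; apply/leq_max_monom/mem_nth; rewrite size_alpha; lia.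
rewrite /mweight size_alpha; apply: leq_trans (leq_add alpha1_le r_gt); lia.
Qed.
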